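(* Let $F\in Sh^{s,0}_{\Lambda_L}(X)\cap Mod(X)$ be reduced and let $f$ be a local trivialization for $F$. If $f^{-1}$ and $f'^{-1}$ are two choices of right inverses of $f$, then $\epsilon_{(F,f,f^{-1})}=\epsilon_{(F,f,f'^{-1})}$.
   Context: $X=\mathbb{R}^3$ or $S^3$, $k$ a field, $(L,L')$ an $r$-component framed oriented link, $L=K_1\sqcup\dots\sqcup K_r$, framing curves $\ell_s$. Sheaves in $Sh^{s,0}_{\Lambda_L}(X)\cap Mod(X)$ (sheaves of $k$-vector spaces with micro-support at infinity in the unit conormal of $L$, microlocally simple with Morse cone in degree $0$) are equivalent to data $(V,\rho,W_s,\rho_s,T_s)$: $\rho:\pi_1(X\setminus L)\to GL(V)$ the local system on the complement, $W_s$ the stalk on $K_s$ with monodromy $\rho_s$, $T_s:W_s\to V$ the injective restriction map with one-dimensional cokernel, such that the meridian of $K_s$ acts trivially on $T_s(W_s)$ and $\rho(\ell_s)T_s=T_s\rho_s(K_s)$; we view $W_s\subset V$. $F$ is reduced if it admits no nonzero locally constant subsheaf $\mathcal{L}_X$ with $F/\mathcal{L}_X$ a sheaf of the same kind, no nonzero locally constant quotient, and no direct summand $F'$ that is the kernel of a surjection from a nonzero locally constant sheaf onto $i'_*k_{L''}$ for a sublink $L''$. $A_c:V\to V$ denotes trivialized parallel transport along a path $c$ in $X\setminus L$ (with $A_{c_1\cdot c_2}=A_{c_1}A_{c_2}$), $M_t=\rho(m_t)$ for the meridian $m_t$ of $K_t$. A local trivialization is an $r$-tuple of surjective maps $f_s:V\to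 k$ with $f_s|_{W_s}=0$; a right inverse is $f^{-1}=(f_s^{-1})$ with $f_s\circ f_s^{-1}=\mathrm{id}_k$. The augmentation $\epsilon_{(F,f,f^{-1})}$ of the framed cord algebra $\mathrm{Cord}(L)$ is defined on generators by $\epsilon(c_{st})=f_s A_{c_{st}}(\mathrm{id}_V-M_t)f_t^{-1}$ for framed cords $c_{st}$ from $\ell_s$ to $\ell_t$, $\epsilon(\lambda_s)=f_sA_{\ell_s}f_s^{-1}$ ($\ell_s$ the longitude loop), $\epsilon(\mu_s)=1-f_s(\mathrm{id}_V-M_s)f_s^{-1}$. *)

(* Algebraic model of sheaves in Sh^{s,0}_{Lambda_L}(X) /\ Mod(X)
   via the data (V, rho, W_s, rho_s, T_s) described in the paper, with the
   fundamental group pi_1(X \ L) abstracted as a group G equipped with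
   meridians m_s and (framing) longitudes l_s. *)
From HB Require Import structures.
From mathcomp Require Import all_boot all_algebra.
Set Implicit Arguments. Unset Strict Implicit. Unset Printing Implicit Defensive.
Import GRing.Theory.
Local Open Scope ring_scope.

Section LinkSheaves.
Variables (k : fieldType) (G : groupType) (r : nat).

(* A peripheral system: meridian m_s and framing longitude l_s of each
   component K_s, as elements of pi_1(X \ L) (transported to a common base
   point); they commute, as they lie in the peripheral subgroup of K_s. *)
Record peripheral := Peripheral {
  mer : 'I_r -> G;
  lon : 'I_r -> G;
  mer_lon_comm : forall s, (mer s * lon s)%g = (lon s * mer s)%g }.

Variable P : peripheral.
Variable V : lmodType k.

Definition is_linear_map (A B : lmodType k) (h : A -> B) : Prop :=
  forall (a : k) (u v : A), h (a *: u + v) = a *: h u + h v.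

Definition is_subspace (U : V -> Prop) : Prop :=
  U 0 /\ forall (a : k) (u v : V), U u -> U v -> U (a *: u + v).

Definition codim_one (U : V -> Prop) : Prop :=
  exists v0 : V, ~ U v0 /\ forall v : V, exists a : k, exists w : V, U w /\ v = a *: v0 + w.

(* The data (V, rho, W_s, rho_s, T_s), with W_s viewed as a subspace of V
   (T_s the inclusion), rho_s(K_s) given by monK s acting on W_s. *)
Record link_sheaf := LinkSheaf {
  rho : G -> V -> V;
  rho_lin : forall g, is_linear_map (rho g);
  rho_mul : forall g h (v : V), rho (g * h)%g v = rho g (rho h v);
  rho_one : forall v : V, rho 1%g v = v;
  W : 'I_r -> V -> Prop;
  W_sub : forall s, is_subspace (W s);
  W_codim : forall s, codim_one (W s);
  monK : 'I_r -> V -> V;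
  monK_lin : forall s, is_linear_map (monK s);
  monK_stable : forall s w, W s w -> W s (monK s w);
  monK_bij : forall s, exists monKi : V -> V,
      forall w, W s w -> W s (monKi w) /\ monK s (monKi w) = w /\ monKi (monK s w) = w;
  mer_triv : forall s w, W s w -> rho (mer P s) w = w;
  lon_compat : forall s w, W s w -> rho (lon P s) w = monK s w }.

Variable F : link_sheaf.

(* (i) a nonzero constant (= locally constant, X being simply connected)
   subsheaf k_X^U of F: a nonzero subspace U of V, fixed pointwise by rho,
   contained in every stalk W_s.  (F / k_X^U is then automatically of the
   same kind.) *)
Definition has_const_subsheaf : Prop :=
  exists U : V -> Prop, is_subspace U /\ (exists u, U u /\ u <> 0) /\
    (forall g u, U u -> rho F g u = u) /\ (forall s u, U u -> W F s u).

(* (ii) a nonzero constant quotient F ->> k_X^(V/N): a proper subspace N such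
   that G acts trivially on V/N and each stalk map W_s -> V/N is onto. *)
Definition has_const_quotient : Prop :=
  exists N : V -> Prop, is_subspace N /\ (exists v, ~ N v) /\
    (forall g v, N (rho F g v - v)) /\
    (forall s v, exists w, W F s w /\ N (v - w)).

(* (iii) a direct summand F' = ker (k_X^E ->> i'_* k_{L''}): V = V' (+) V''
   with V' nonzero and both rho-invariant, rho trivial on V', the stalks
   splitting W_s = (W_s /\ V') (+) (W_s /\ V''), and for each s either
   W_s /\ V' = V' (s not in L'') or W_s /\ V' is the kernel of a nonzero
   functional on V' (s in L''). *)
Definition has_special_summand : Prop :=
  exists V1 V2 : V -> Prop,
    is_subspace V1 /\ is_subspace V2 /\ (exists u, V1 u /\ u <> 0) /\
    (forall v, V1 v -> V2 v -> v = 0) /\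
    (forall v, exists v1 v2, V1 v1 /\ V2 v2 /\ v = v1 + v2) /\
    (forall g v, V1 v -> rho F g v = v) /\
    (forall g v, V2 v -> V2 (rho F g v)) /\
    (forall s w, W F s w -> exists w1 w2, V1 w1 /\ V2 w2 /\ W F s w1 /\ W F s w2 /\ w = w1 + w2) /\
    (forall s, (forall v, V1 v -> W F s v) \/
       exists phi : V -> k, is_linear_map (A:=V) (B:=k^o) phi /\
         (exists v, V1 v /\ phi v <> 0) /\
         (forall v, V1 v -> (W F s v <-> phi v = 0))).

Definition reduced : Prop :=
  ~ has_const_subsheaf /\ ~ has_const_quotient /\ ~ has_special_summand.

Definition local_triv (f : 'I_r -> V -> k) : Prop :=
  forall s, is_linear_map (A:=V) (B:=k^o) (f s) /\
    (forall a : k, exists v, f s v = a) /\ (forall w, W F s w -> f s w = 0).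

Definition right_inv_family (f : 'I_r -> V -> k) (finv : 'I_r -> k -> V) : Prop :=
  forall s, is_linear_map (A:=k^o) (B:=V) (finv s) /\ forall a : k, f s (finv s a) = a.

End LinkSheaves.

(* Generators of the framed cord algebra Cord(L): framed cords c_st from l_s to
   l_t (homotopy classes, represented by the element of G giving the
   trivialized parallel transport A_c), lambda_s and mu_s. *)
Inductive cord_gen (G : groupType) (r : nat) : Type :=
  | CordGen : 'I_r -> 'I_r -> G -> cord_gen G r
  | LamGen : 'I_r -> cord_gen G r
  | MuGen : 'I_r -> cord_gen G r.

(* The augmentation epsilon_{(F,f,f^{-1})} on generators; a linear map k -> k
   is identified with its value at 1. *)
Definition augmentation (k : fieldType) (G : groupType) (r : nat)
    (P : peripheral G r) (V : lmodType k) (F : @link_sheaf k G r P V)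
    (f : 'I_r -> V -> k) (finv : 'I_r -> k -> V) (x : cord_gen G r) : k :=
  match x with
  | CordGen s t c => f s (rho F c (finv t 1 - rho F (mer P t) (finv t 1)))
  | LamGen s => f s (rho F (lon P s) (finv s 1))
  | MuGen s => 1 - f s (finv s 1 - rho F (mer P s) (finv s 1))
  end.

(* Two right inverses of f_s differ by a vector of ker f_s, and ker f_s = W_s
   because W_s has codimension one and f_s is onto.  The meridian M_t fixes
   W_t pointwise, so (id - M_t) f_t^{-1} does not depend on the choice; the
   longitude acts on W_s by rho_s(K_s), which preserves W_s = ker f_s, so
   f_s A_{l_s} f_s^{-1} does not depend on it either. *)
From HB Require Import structures.
From mathcomp Require Import all_boot all_algebra.
From Stdlib Require Import FunctionalExtensionality.
Set Implicit Arguments. Unset Strict Implicit. Unset Printing Implicit Defensive.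
Import GRing.Theory.
Local Open Scope ring_scope.

Section LinearMaps.
Variables (k : fieldType) (A B : lmodType k) (h : A -> B).
Hypothesis h_lin : is_linear_map h.

Lemma lin_mapD (x y : A) : h (x + y) = h x + h y.
Proof. by have := h_lin 1 x y; rewrite !scale1r. Qed.

Lemma lin_mapB (x y : A) : h (x - y) = h x - h y.
Proof. by have := h_lin (-1) y x; rewrite !scaleN1r addrC => ->; rewrite addrC. Qed.

End LinearMaps.

Lemma codim_one_ker (k : fieldType) (V : lmodType k) (U : V -> Prop)
    (phi : V -> k^o) :
  codim_one U -> is_linear_map phi -> (forall w, U w -> phi w = 0) ->
  (exists v, phi v <> 0) -> forall u, phi u = 0 -> U u.
Proof.
move=> [v0 [_ decomp]] phi_lin phiU [v phi_v] u phi_u.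
have phi_dec a w : U w -> phi (a *: v0 + w) = a * phi v0.
  by move=> Uw; rewrite phi_lin (phiU _ Uw) addr0.
have phi_v0 : phi v0 != 0.
  apply/eqP => phi_v0; apply: phi_v.
  by have [b [w [Uw ->]]] := decomp v; rewrite phi_dec // phi_v0 mulr0.
have [a [w [Uw def_u]]] := decomp u.
suff a0 : a = 0 by rewrite def_u a0 scale0r add0r.
move: phi_u; rewrite def_u phi_dec // => /eqP.
by rewrite mulf_eq0 (negbTE phi_v0) orbF => /eqP.
Qed.

Section RightInverses.
Variables (k : fieldType) (G : groupType) (r : nat) (P : peripheral G r).
Variables (V : lmodType k) (F : link_sheaf P V) (f : 'I_r -> V -> k).
Hypothesis f_triv : local_triv F f.

Lemma local_triv_ker s u : f s u = 0 -> W F s u.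
Proof.
have [f_lin [f_onto fW]] := f_triv s.
apply: codim_one_ker f_lin fW _ u; first exact: W_codim.
by have [v fv] := f_onto 1; exists v; rewrite fv; apply/eqP; exact: oner_neq0.
Qed.

Lemma right_inv_subW finv finv' s a :
    right_inv_family f finv -> right_inv_family f finv' ->
  W F s (finv' s a - finv s a).
Proof.
move=> finvK finv'K; apply: local_triv_ker.
have [f_lin _] := f_triv s.
by rewrite (lin_mapB f_lin) (proj2 (finvK s)) (proj2 (finv'K s)) subrr.
Qed.

Lemma mer_sub_addW t v w :
  W F t w -> (w + v) - rho F (mer P t) (w + v) = v - rho F (mer P t) v.
Proof.
move=> Ww; rewrite (lin_mapD (rho_lin F _)) (mer_triv Ww).
by rewrite opprD addrACA subrr add0r.
Qed.

Lemma f_lon_addW s v w :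
  W F s w -> f s (rho F (lon P s) (w + v)) = f s (rho F (lon P s) v).
Proof.
move=> Ww; have [f_lin [_ fW]] := f_triv s.
by rewrite (lin_mapD (rho_lin F _)) (lon_compat Ww) (lin_mapD f_lin)
  (fW _ (monK_stable Ww)) add0r.
Qed.

End RightInverses.

Theorem proposition4p5 (k : fieldType) (G : groupType) (r : nat)
    (P : peripheral G r) (V : lmodType k) (F : @link_sheaf k G r P V)
    (HF : reduced F) (f : 'I_r -> V -> k) (Hf : local_triv F f)
    (finv finv' : 'I_r -> k -> V)
    (Hinv : right_inv_family f finv) (Hinv' : right_inv_family f finv') :
  augmentation F f finv = augmentation F f finv'.
Proof.
have def_finv' t : finv' t 1 = (finv' t 1 - finv t 1) + finv t 1.
  by rewrite subrK.
have diffW t := right_inv_subW Hf t 1 Hinv Hinv'.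
apply: functional_extensionality => -[s t c|s|s] /=.
- by rewrite [finv' t 1]def_finv' (mer_sub_addW _ (diffW t)).
- by rewrite [finv' s 1]def_finv' (f_lon_addW Hf _ (diffW s)).
- by rewrite [finv' s 1]def_finv' (mer_sub_addW _ (diffW s)).
Qed.
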